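(* Let $\mathbf{s}$ be a linearly recurrent sequence over $\{0,1\}$. Then for every integer $k\ge1$, $C_{2k}(\mathbf{s},N)\gg N$, i.e., there is a constant $c>0$ (depending on $\mathbf{s}$ and $k$) such that $C_{2k}(\mathbf{s},N)\ge cN$ for all sufficiently large $N$.
   Context: A sequence $\mathbf{s}$ is linearly recurrent if there is a constant $C>0$ such that every factor (finite block) of $\mathbf{s}$ occurs infinitely often and the distance between two consecutive occurrences of any length-$n$ factor of $\mathbf{s}$ is at most $Cn$. Correlation measure: for $\mathbf{s}$ over $\{0,1\}$, an integer $k\ge1$, $D=(d_1,\dots,d_k)\in\mathbb{N}^k$ with $0\le d_1<\cdots<d_k$ and $M\in\mathbb{N}$, put $V(\mathbf{s},M,D)=\sum_{n=0}^{M-1}(-1)^{\mathbf{s}(n+d_1)+\cdots+\mathbf{s}(n+d_k)}$, and $C_k(\mathbf{s},N)=\max_{M,D}|V(\mathbf{s},M,D)|$ over all such $D$ and integers $M$ with $M+d_k\le N$. *)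

From HB Require Import structures.
From mathcomp Require Import all_boot all_order all_algebra.
From mathcomp Require Import reals.
Set Implicit Arguments. Unset Strict Implicit. Unset Printing Implicit Defensive.
Import Order.TTheory GRing.Theory Num.Theory.

(* A binary sequence s : nat -> bool (true = 1, false = 0). *)

Definition occurs_at (s : nat -> bool) (i n j : nat) : Prop :=
  forall t : nat, (t < n)%N -> s (j + t)%N = s (i + t)%N.

Definition linearly_recurrent (R : realType) (s : nat -> bool) : Prop :=
  exists C : R, (0 < C)%R /\
    (forall i n m : nat, exists j : nat, (m <= j)%N /\ occurs_at s i n j) /\
    (forall i n j j' : nat, (0 < n)%N ->
       occurs_at s i n j -> occurs_at s i n j' -> (j < j')%N ->
       (forall l : nat, (j < l < j')%N -> ~ occurs_at s i n l) ->
       (((j' - j)%N%:R : R) <= C * n%:R)%R).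

Definition corrV (s : nat -> bool) (M : nat) (D : seq nat) : int :=
  (\sum_(n < M) (-1) ^+ (\sum_(d <- D) (s (n + d)%N : nat)))%R.

(* C_k(s, N) = max |V(s,M,D)| over D = {d_1 < ... < d_k} (a k-element set of
   naturals) and M with M + d_k <= N (so all d_i <= N). *)
Definition corrC (k : nat) (s : nat -> bool) (N : nat) : nat :=
  \max_(D : {set 'I_N.+1} | #|D| == k)
    \max_(M < N.+1 | (M + \max_(d in D) (d : nat) <= N)%N)
      `|corrV s M [seq (val d) | d <- enum D]|%N.

(* Take L about N/(K+1), where K bounds the linear-recurrence constant. The
   prefix of length L returns at some 0 < p <= K L, so s is p-periodic on
   [0, L + p). With q the least multiple of p above k, the window pair
   D = {0, ..., k-1} u {q, ..., q+k-1} makes every term of V(s, M, D) equal to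
   (-1)^(2 x) = 1 for M = L - 2k, whence C_2k(s, N) >= L - 2k >= N / (2(K+1)). *)
From HB Require Import structures.
From mathcomp Require Import all_boot all_order all_algebra.
From mathcomp Require Import reals.
From mathcomp Require Import zify.
Import Order.TTheory GRing.Theory Num.Theory.

Set Implicit Arguments.
Unset Strict Implicit.

Definition prefix_occursb (s : nat -> bool) (L j : nat) : bool :=
  all (fun t => s (j + t)%N == s t) (iota 0 L).

Lemma prefix_occursP s L j : reflect (occurs_at s 0 L j) (prefix_occursb s L j).
Proof.
apply: (iffP allP) => [occ t tL | occ t].
  by apply/eqP/occ; rewrite mem_iota.
by rewrite mem_iota add0n => /andP[_ /occ ->].
Qed.

Lemma linearly_recurrent_return (R : realType) (s : nat -> bool) :
  linearly_recurrent R s ->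
  exists K : nat, forall L, (0 < L)%N ->
    exists p, [/\ (0 < p)%N, (p <= K * L)%N & forall t, (t < L)%N -> s (p + t)%N = s t].
Proof.
move=> [C [C_gt0 [recurrent gap]]].
exists (Num.Def.archi_bound C) => L L_gt0.
have C_lt_K : (C < (Num.Def.archi_bound C)%:R)%R by apply/archi_boundP/ltW.
have [j [j_gt0 /prefix_occursP occ_j]] := recurrent 0%N L 1%N.
have ex_return : exists j, (0 < j)%N && prefix_occursb s L j by exists j; rewrite occ_j andbT.
case: (ex_minnP ex_return) => p /andP[p_gt0 /prefix_occursP occ_p] p_min.
exists p; split=> //.
have first_return : forall l, (0 < l < p)%N -> ~ occurs_at s 0 L l.
  move=> l /andP[l_gt0 lp] /prefix_occursP occ_l.
  by have := p_min l; rewrite l_gt0 occ_l => /(_ isT); lia.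
have := gap 0%N L 0%N p L_gt0 (fun _ _ => erefl) occ_p p_gt0 first_return.
rewrite subn0 -(ler_nat R) natrM => /le_trans; apply.
by rewrite ler_wpM2r // ltW.
Qed.

Lemma prefix_periodic (s : nat -> bool) L p :
  (forall t, (t < L)%N -> s (p + t)%N = s t) ->
  forall i t, (t + i * p < L + p)%N -> s (t + i * p)%N = s t.
Proof.
move=> per; elim=> [|i IH] t lt_tip; first by rewrite mul0n addn0.
by rewrite mulSn (addnC p) addnA addnC per; [apply: IH | ]; lia.
Qed.

Lemma corrV_perm s M D D' : perm_eq D D' -> corrV s M D = corrV s M D'.
Proof. by move=> eqDD'; apply: eq_bigr => n _; rewrite (perm_big _ eqDD'). Qed.

Lemma corrV_translate_pair s M q ds :
  (forall n d, (n < M)%N -> d \in ds -> s (n + (q + d))%N = s (n + d)%N) ->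
  corrV s M (ds ++ map (addn q) ds) = Posz M.
Proof.
move=> shift; rewrite /corrV (eq_bigr (fun _ => 1%R)); first by rewrite sumr_const card_ord natz.
move=> n _; rewrite big_cat big_map /=.
rewrite [X in (_ + X)%N](eq_big_seq (fun d => s (n + d)%N : nat)).
  by rewrite addnn -mul2n exprM sqrrN expr1n.
by move=> d d_in; rewrite shift.
Qed.

Lemma corrV_le_corrC k s N (D : {set 'I_N.+1}) M :
  #|D| = k -> (M + \max_(d in D) (d : nat) <= N)%N ->
  (`|corrV s M [seq val d | d <- enum D]| <= corrC k s N)%N.
Proof.
move=> cardD maxD; have lt_MN : (M < N.+1)%N by lia.
apply: leq_trans (leq_bigmax_cond D (introT eqP cardD)).
exact: leq_trans (leq_bigmax_cond (Ordinal lt_MN) maxD).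
Qed.

Definition window_pair N k q : {set 'I_N.+1} :=
  [set i : 'I_N.+1 | (i < k)%N || (q <= i < q + k)%N].

Section WindowPair.

Variables N k q : nat.
Hypotheses (le_kq : (k <= q)%N) (le_qkN : (q + k <= N.+1)%N).

Lemma perm_window_pair :
  perm_eq [seq val d | d <- enum (window_pair N k q)] (iota 0 k ++ iota q k).
Proof.
apply: uniq_perm.
- by rewrite map_inj_uniq ?enum_uniq //; exact: val_inj.
- rewrite cat_uniq !iota_uniq andbT /=; apply/hasPn => i.
  by rewrite !mem_iota; lia.
move=> i; rewrite mem_cat !mem_iota; apply/mapP/idP => [[d] | i_in].
  by rewrite mem_enum inE => + -> /=; lia.
have lt_iN : (i < N.+1)%N by lia.
by exists (Ordinal lt_iN); rewrite // mem_enum inE /=; lia.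
Qed.

Lemma card_window_pair : #|window_pair N k q| = (2 * k)%N.
Proof.
rewrite cardE -(size_map val) (perm_size perm_window_pair).
by rewrite size_cat !size_iota addnn mul2n.
Qed.

Lemma max_window_pair : (\max_(d in window_pair N k q) (d : nat) <= (q + k).-1)%N.
Proof. by apply/bigmax_leqP => i; rewrite inE; lia. Qed.

End WindowPair.

Lemma corrC_ge_return (s : nat -> bool) k L p N :
  (0 < p)%N -> (forall t, (t < L)%N -> s (p + t)%N = s t) -> (L + p <= N.+1)%N ->
  (L - 2 * k <= corrC (2 * k) s N)%N.
Proof.
move=> p_gt0 per le_LpN.
have [short | long] := ltnP L (2 * k); first by rewrite (_ : L - 2 * k = 0)%N //; lia.
set q := ((k %/ p).+1 * p)%N.
have lt_kq : (k < q)%N by exact: ltn_ceil.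
have le_qkp : (q <= k + p)%N by rewrite /q mulSn addnC leq_add2r leq_divM.
have le_qkN : (q + k <= N.+1)%N by lia.
have le_maxN : (L - 2 * k + \max_(d in window_pair N k q) (d : nat) <= N)%N.
  by have := max_window_pair (ltnW lt_kq) le_qkN; lia.
have := corrV_le_corrC s (card_window_pair (ltnW lt_kq) le_qkN) le_maxN.
rewrite (corrV_perm _ _ (perm_window_pair (ltnW lt_kq) le_qkN)).
rewrite -(addn0 q) iotaDl corrV_translate_pair //.
move=> n d lt_n; rewrite mem_iota => /andP[_ lt_dk].
by rewrite addnA -addnA [(q + _)%N]addnC addnA (prefix_periodic per) //; lia.
Qed.

Theorem mainTheorem2 (R : realType) (s : nat -> bool) :
  linearly_recurrent R s ->
  forall k : nat, (1 <= k)%N ->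
    exists c : R, (0 < c)%R /\
      exists N0 : nat, forall N : nat, (N0 <= N)%N ->
        (c * N%:R <= (corrC (2 * k) s N)%:R)%R.
Proof.
move=> /linearly_recurrent_return [K return_time] k _.
have den_gt0 : (0 < (2 * (K + 1))%N%:R :> R)%R by rewrite ltr0n; lia.
exists ((2 * (K + 1))%N%:R^-1)%R; split; first by rewrite invr_gt0.
exists ((K + 1) * (4 * k + 1))%N => N le_N0N.
set L := (N %/ (K + 1))%N.
have le_LN : (L * (K + 1) <= N)%N by exact: leq_divM.
have lt_NL : (N < L.+1 * (K + 1))%N by rewrite ltn_ceil ?addn1.
have long : (4 * k + 1 <= L)%N by rewrite leq_divRL //; lia.
have [p [p_gt0 le_pKL per]] := return_time L ltac:(lia).
have le_LpN : (L + p <= N.+1)%N by nia.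
apply: (le_trans (y := ((L - 2 * k)%N%:R)%R)).
  by rewrite ler_pdivrMl // -natrM ler_nat; nia.
by rewrite ler_nat (corrC_ge_return _ p_gt0 per le_LpN).
Qed.
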